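(* Let $p,q$ be distinct propositional letters and let $M_{pq}=(W,V_{pq})$ be the model with $W=\{w_1,w_2,w_3\}$ in which $p$ is true exactly at $w_1,w_2$, $q$ is true exactly at $w_2,w_3$, and every other letter is true at no world. Let $\varphi(a,b)$ be a context (of propositional dependence logic $\mathcal D$) in which $p,q$ do not occur, and let $\varphi(=\!(p),=\!(q))$ be obtained by replacing $a$ with $=\!(p)$ and $b$ with $=\!(q)$. Then $\varphi(=\!(p),=\!(q))$ is equivalent in $M_{pq}$ to one of: $\top$; $(=\!(p)\land=\!(q))\otimes(=\!(p)\land=\!(q))$; $=\!(p)$; $=\!(q)$; $=\!(p)\land=\!(q)$; $\bot$.
   Context: Formulas of $\mathcal D$: $\varphi::= p\mid\neg p\mid\bot\mid=\!(p_1,\dots,p_n;q)\mid\varphi\land\varphi\mid\varphi\otimes\varphi$ with $p,q,p_i$ propositional letters ($n\ge0$; for $n=0$ the atom is written $=\!(q)$). A context $\varphi(a,b)$ is a $\mathcal D$ formula in which the letters $a,b$ do not occur negated nor inside a dependence atom. A model is $M=(W,V)$, $V(w)$ the set of letters true at $w$. Support at $s\subseteq W$: $s\models p$ iff $p$ true at all $w\in s$; $s\models\neg p$ iff $p$ false at all $w\in s$; $s\models\bot$ iff $s=\emptyset$; $s\models\psi\land\chi$ iff both; $s\models\psi\otimes\chi$ iff $s=t_1\cup t_2$ with $t_1\models\psi$, $t_2\models\chi$; $s\models=\!(p_1,\dots,p_n;q)$ iff any two worlds of $s$ agreeing on all $p_i$ agree on $q$ (so $s\models=\!(q)$ iff $q$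 has the same value throughout $s$). $\top$ denotes a formula supported by every state (in $\mathcal D$, $p\otimes\neg p$). Equivalence in $M$ means being supported by the same states of $M$. *)

From Stdlib Require Import List Bool Arith.
Import ListNotations.

Definition letter := nat.

Inductive form : Type :=
| Atom (p : letter)
| NegAtom (p : letter)
| Bot
| Dep (ps : list letter) (q : letter)   (* =(p1,...,pn; q); n = 0 gives =(q) *)
| And (f g : form)
| Tensor (f g : form).

(* A model over a world type W: V w r = true iff letter r is true at w. *)
Definition state (W : Type) := W -> bool.

Fixpoint supports {W : Type} (V : W -> letter -> bool) (s : state W) (f : form) : Prop :=
  match f with
  | Atom p => forall w, s w = true -> V w p = true
  | NegAtom p => forall w, s w = true -> V w p = false
  | Bot => forall w, s w = false
  | Dep ps q => forall w v, s w = true -> s v = true ->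
                 (forall r, In r ps -> V w r = V v r) -> V w q = V v q
  | And f g => supports V s f /\ supports V s g
  | Tensor f g => exists t1 t2 : state W,
                   (forall w, s w = orb (t1 w) (t2 w)) /\
                   supports V t1 f /\ supports V t2 g
  end.

Definition equiv_in {W : Type} (V : W -> letter -> bool) (f g : form) : Prop :=
  forall s : state W, supports V s f <-> supports V s g.

Definition dep0 (q : letter) : form := Dep [] q.

(* Top := p (+) ~p, with p := 0 (any letter works). *)
Definition Top : form := Tensor (Atom 0) (NegAtom 0).

Fixpoint occurs (r : letter) (f : form) : Prop :=
  match f with
  | Atom p | NegAtom p => r = p
  | Bot => False
  | Dep ps q => In r ps \/ r = q
  | And f g | Tensor f g => occurs r f \/ occurs r g
  end.

Fixpoint occurs_bad (r : letter) (f : form) : Prop :=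
  match f with
  | Atom _ => False
  | NegAtom p => r = p
  | Bot => False
  | Dep ps q => In r ps \/ r = q
  | And f g | Tensor f g => occurs_bad r f \/ occurs_bad r g
  end.

(* phi(a,b) is a context: a, b occur neither negated nor inside dependence atoms. *)
Definition is_context (a b : letter) (phi : form) : Prop :=
  ~ occurs_bad a phi /\ ~ occurs_bad b phi.

Fixpoint subst2 (a b : letter) (fa fb : form) (phi : form) : form :=
  match phi with
  | Atom r => if Nat.eqb r a then fa else if Nat.eqb r b then fb else Atom r
  | NegAtom r => NegAtom r
  | Bot => Bot
  | Dep ps q => Dep ps q
  | And f g => And (subst2 a b fa fb f) (subst2 a b fa fb g)
  | Tensor f g => Tensor (subst2 a b fa fb f) (subst2 a b fa fb g)
  end.

Inductive world3 : Type := w1 | w2 | w3.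

Definition V_pq (p q : letter) (w : world3) (r : letter) : bool :=
  (Nat.eqb r p && match w with w1 | w2 => true | w3 => false end)
  || (Nat.eqb r q && match w with w1 => false | w2 | w3 => true end).

(* A state of M_pq is a subset of {w1, w2, w3}, and the states supporting a formula
   form a family of such subsets. Six families suffice: those of =(p), =(q), Bot,
   Top, and the states with at most one, resp. at most two, worlds. This list
   contains the families of Bot and of every literal and dependence atom free of p
   and q, and it is closed under intersection (for And) and under pairwise union
   (for Tensor), which is a finite check. Induction on the context then shows that
   plugging =(p) and =(q) into it always yields one of the six families. *)

From Stdlib Require Import Bool Arith Setoid Classical.

Lemma supports_dep0 {W : Type} (V : W -> letter -> bool) (s : state W) (r : letter) :
  supports V s (dep0 r) <-> supports V s (Atom r) \/ supports V s (NegAtom r).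
Proof.
  simpl. split.
  - intro Hdep.
    destruct (classic (exists w, s w = true /\ V w r = true)) as [[w [Hw Hr]] | Hnone].
    + left. intros v Hv. rewrite <- Hr. exact (Hdep v w Hv Hw (fun _ F => match F with end)).
    + right. intros v Hv. apply not_true_is_false. intro Hr. apply Hnone. now exists v.
  - intros [H | H] w v Hw Hv _; now rewrite (H w Hw), (H v Hv).
Qed.

Lemma supports_Top {W : Type} (V : W -> letter -> bool) (s : state W) : supports V s Top.
Proof.
  exists (fun w => s w && V w 0), (fun w => s w && negb (V w 0)). repeat split.
  - intro w. now destruct (s w), (V w 0).
  - intros w Hw. now apply andb_true_iff in Hw.
  - intros w Hw. apply andb_true_iff in Hw. now apply negb_true_iff.
Qed.

Inductive team_class := Empty | AtMostOne | DepP | DepQ | AtMostTwo | Full.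

(* [class_mem c x1 x2 x3] tells whether the state containing exactly the [w_i]
   with [x_i = true] belongs to the family [c]. *)
Definition class_mem (c : team_class) (x1 x2 x3 : bool) : bool :=
  match c with
  | Empty => negb (x1 || x2 || x3)
  | AtMostOne => negb (x1 && x2 || x1 && x3 || x2 && x3)
  | DepP => negb ((x1 || x2) && x3)
  | DepQ => negb (x1 && (x2 || x3))
  | AtMostTwo => negb (x1 && x2 && x3)
  | Full => true
  end.

Definition class_and (c d : team_class) : team_class :=
  match c, d with
  | Empty, _ | _, Empty => Empty
  | Full, e | e, Full => e
  | AtMostOne, _ | _, AtMostOne => AtMostOne
  | DepP, DepQ | DepQ, DepP => AtMostOne
  | DepP, _ | _, DepP => DepP
  | DepQ, _ | _, DepQ => DepQ
  | AtMostTwo, AtMostTwo => AtMostTwo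
  end.

Definition class_tensor (c d : team_class) : team_class :=
  match c, d with
  | Empty, e | e, Empty => e
  | AtMostOne, AtMostOne => AtMostTwo
  | _, _ => Full
  end.

Lemma class_mem_and c d x1 x2 x3 :
  class_mem (class_and c d) x1 x2 x3 = class_mem c x1 x2 x3 && class_mem d x1 x2 x3.
Proof. destruct c, d, x1, x2, x3; reflexivity. Qed.

Definition existsb_bool (P : bool -> bool) : bool := P true || P false.

Lemma existsb_bool_true P : existsb_bool P = true <-> exists b, P b = true.
Proof.
  unfold existsb_bool. rewrite orb_true_iff. split.
  - intros [H | H]; eexists; exact H.
  - intros [[] H]; auto.
Qed.

Lemma class_mem_tensor_existsb c d x1 x2 x3 :
  class_mem (class_tensor c d) x1 x2 x3 =
  existsb_bool (fun y1 => existsb_bool (fun y2 => existsb_bool (fun y3 =>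
  existsb_bool (fun z1 => existsb_bool (fun z2 => existsb_bool (fun z3 =>
    class_mem c y1 y2 y3 && class_mem d z1 z2 z3 &&
    eqb x1 (y1 || z1) && eqb x2 (y2 || z2) && eqb x3 (y3 || z3))))))).
Proof. destruct c, d, x1, x2, x3; reflexivity. Qed.

Lemma class_mem_tensor c d x1 x2 x3 :
  class_mem (class_tensor c d) x1 x2 x3 = true <->
  exists y1 y2 y3 z1 z2 z3, class_mem c y1 y2 y3 = true /\ class_mem d z1 z2 z3 = true /\
    x1 = y1 || z1 /\ x2 = y2 || z2 /\ x3 = y3 || z3.
Proof.
  rewrite class_mem_tensor_existsb. do 6 setoid_rewrite existsb_bool_true.
  repeat setoid_rewrite andb_true_iff. setoid_rewrite eqb_true_iff.
  split; intros (y1 & y2 & y3 & z1 & z2 & z3 & H); exists y1, y2, y3, z1, z2, z3; tauto.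
Qed.

Section ModelPQ.

Variables p q : letter.
Hypothesis p_neq_q : p <> q.
Local Notation V := (V_pq p q).

Definition has_class (f : form) (c : team_class) : Prop :=
  forall s : state world3, supports V s f <-> class_mem c (s w1) (s w2) (s w3) = true.

Lemma has_class_equiv f g c : has_class f c -> has_class g c -> equiv_in V f g.
Proof. intros Hf Hg s. now rewrite (Hf s), (Hg s). Qed.

Lemma V_pq_p w : V w p = match w with w3 => false | _ => true end.
Proof.
  unfold V_pq. rewrite Nat.eqb_refl, (proj2 (Nat.eqb_neq p q) p_neq_q).
  now destruct w.
Qed.

Lemma V_pq_q w : V w q = match w with w1 => false | _ => true end.
Proof.
  unfold V_pq. rewrite Nat.eqb_refl, (proj2 (Nat.eqb_neq q p) (not_eq_sym p_neq_q)).
  now destruct w.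
Qed.

Lemma V_pq_other r w : r <> p -> r <> q -> V w r = false.
Proof.
  intros Hp Hq. unfold V_pq.
  now rewrite (proj2 (Nat.eqb_neq r p) Hp), (proj2 (Nat.eqb_neq r q) Hq).
Qed.

Lemma supports_Atom_world3 r s : supports V s (Atom r) <->
  (s w1 = true -> V w1 r = true) /\ (s w2 = true -> V w2 r = true) /\
  (s w3 = true -> V w3 r = true).
Proof. split; [intro H; auto | intros (H1 & H2 & H3) []; assumption]. Qed.

Lemma supports_NegAtom_world3 r s : supports V s (NegAtom r) <->
  (s w1 = true -> V w1 r = false) /\ (s w2 = true -> V w2 r = false) /\
  (s w3 = true -> V w3 r = false).
Proof. split; [intro H; auto | intros (H1 & H2 & H3) []; assumption]. Qed.

Lemma has_class_Bot : has_class Bot Empty.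
Proof.
  intro s. simpl. split.
  - intro H. now rewrite !H.
  - intros Hs []; destruct (s w1), (s w2), (s w3); easy.
Qed.

Lemma has_class_Atom_other r : r <> p -> r <> q -> has_class (Atom r) Empty.
Proof.
  intros Hp Hq s. rewrite supports_Atom_world3, !V_pq_other by assumption.
  destruct (s w1), (s w2), (s w3); simpl; intuition discriminate.
Qed.

Lemma has_class_dep0_p : has_class (dep0 p) DepP.
Proof.
  intro s. rewrite supports_dep0, supports_Atom_world3, supports_NegAtom_world3, !V_pq_p.
  destruct (s w1), (s w2), (s w3); simpl; intuition discriminate.
Qed.

Lemma has_class_dep0_q : has_class (dep0 q) DepQ.
Proof.
  intro s. rewrite supports_dep0, supports_Atom_world3, supports_NegAtom_world3, !V_pq_q.
  destruct (s w1), (s w2), (s w3); simpl; intuition discriminate.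
Qed.

Lemma has_class_Full f : (forall s, supports V s f) -> has_class f Full.
Proof. intros H s. now split. Qed.

Lemma has_class_And f g c d :
  has_class f c -> has_class g d -> has_class (And f g) (class_and c d).
Proof. intros Hf Hg s. simpl. now rewrite (Hf s), (Hg s), class_mem_and, andb_true_iff. Qed.

Lemma has_class_Tensor f g c d :
  has_class f c -> has_class g d -> has_class (Tensor f g) (class_tensor c d).
Proof.
  intros Hf Hg s. simpl. rewrite class_mem_tensor. split.
  - intros (t1 & t2 & Hs & H1 & H2). apply Hf in H1. apply Hg in H2.
    exists (t1 w1), (t1 w2), (t1 w3), (t2 w1), (t2 w2), (t2 w3).
    now rewrite !Hs.
  - intros (y1 & y2 & y3 & z1 & z2 & z3 & Hy & Hz & E1 & E2 & E3).
    exists (fun w => match w with w1 => y1 | w2 => y2 | w3 => y3 end),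
           (fun w => match w with w1 => z1 | w2 => z2 | w3 => z3 end).
    split; [now intros [] | split; [apply Hf | apply Hg]; assumption].
Qed.

Definition class_formula (c : team_class) : form :=
  match c with
  | Empty => Bot
  | AtMostOne => And (dep0 p) (dep0 q)
  | DepP => dep0 p
  | DepQ => dep0 q
  | AtMostTwo => Tensor (And (dep0 p) (dep0 q)) (And (dep0 p) (dep0 q))
  | Full => Top
  end.

Lemma class_formula_has_class c : has_class (class_formula c) c.
Proof.
  pose proof (has_class_And _ _ _ _ has_class_dep0_p has_class_dep0_q) as Hdeps.
  destruct c.
  - exact has_class_Bot.
  - exact Hdeps.
  - exact has_class_dep0_p.
  - exact has_class_dep0_q.
  - exact (has_class_Tensor _ _ _ _ Hdeps Hdeps).
  - apply has_class_Full, supports_Top.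
Qed.

Lemma subst2_has_class a b fa fb ca cb phi :
  has_class fa ca -> has_class fb cb -> ~ occurs p phi -> ~ occurs q phi ->
  exists c, has_class (subst2 a b fa fb phi) c.
Proof.
  intros Ha Hb. induction phi as [r | r | | ps r | f IHf g IHg | f IHf g IHg];
    simpl; intros Hp Hq.
  - destruct (Nat.eqb r a); [now exists ca|].
    destruct (Nat.eqb r b); [now exists cb|].
    exists Empty. apply has_class_Atom_other; auto.
  - exists Full. apply has_class_Full. intros s w _. apply V_pq_other; auto.
  - exists Empty. exact has_class_Bot.
  - exists Full. apply has_class_Full. intros s w v _ _ _. rewrite !V_pq_other; auto.
  - destruct IHf as [c Hc], IHg as [d Hd]; try tauto.
    exists (class_and c d). now apply has_class_And.
  - destruct IHf as [c Hc], IHg as [d Hd]; try tauto.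
    exists (class_tensor c d). now apply has_class_Tensor.
Qed.

End ModelPQ.

Theorem lemma5 (p q a b : letter) (phi : form) :
  p <> q -> a <> b ->
  is_context a b phi ->
  ~ occurs p phi -> ~ occurs q phi ->
  let psi := subst2 a b (dep0 p) (dep0 q) phi in
  let V := V_pq p q in
  equiv_in V psi Top \/
  equiv_in V psi (Tensor (And (dep0 p) (dep0 q)) (And (dep0 p) (dep0 q))) \/
  equiv_in V psi (dep0 p) \/
  equiv_in V psi (dep0 q) \/
  equiv_in V psi (And (dep0 p) (dep0 q)) \/
  equiv_in V psi Bot.
Proof.
  intros Hpq _ _ Hp Hq psi V.
  pose proof (class_formula_has_class p q Hpq) as Hclass.
  destruct (subst2_has_class p q a b _ _ _ _ phi (Hclass DepP) (Hclass DepQ) Hp Hq)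
    as [c Hc].
  pose proof (has_class_equiv p q _ _ _ Hc (Hclass c)) as E.
  destruct c; simpl in E; [do 5 right | do 4 right; left | do 2 right; left
                          | do 3 right; left | right; left | left]; exact E.
Qed.
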